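(* We have $(\chi^L_k)^\dagger=\chi^L_{-k}$ for $k\in\pm\mathcal K^{(\ell_L)}$ and $(\chi^R_k)^\dagger=\chi^R_{-k}$ for $k\in\pm\mathcal K^{(\ell_R)}$; $\{\chi^L_{k_1},\chi^L_{k_2}\}=\delta_{k_1,-k_2}\mathrm{id}$ for $k_1,k_2\in\pm\mathcal K^{(\ell_L)}$; $\{\chi^R_{k_1},\chi^R_{k_2}\}=\delta_{k_1,-k_2}\mathrm{id}$ for $k_1,k_2\in\pm\mathcal K^{(\ell_R)}$; and $\{\chi^L_k,\chi^R_{k'}\}=0$ for $k\in\pm\mathcal K^{(\ell_L)}$, $k'\in\pm\mathcal K^{(\ell_R)}$. Here $\{A,B\}=AB+BA$.
   Context: Fix integers $a<0<b$, $\ell_L=-a$, $\ell_R=b$; for a positive integer $n$, $\mathcal K^{(n)}=\{\frac12,\dots,n-\frac12\}$, $\pm\mathcal K^{(n)}=\mathcal K^{(n)}\cup(-\mathcal K^{(n)})$. $C=\{a,\dots,b\}$, $C^*=\{a+\frac12,\dots,b-\frac12\}$, $C^*_L=\{a+\frac12,\dots,-\frac12\}$, $C^*_R=\{\frac12,\dots,b-\frac12\}$. $\tilde V$ is the complex inner product space with orthonormal basis $(e_\rho)_{\rho\in\{\pm1\}^C}$, $\dagger$ the adjoint. For $x'\in C^*$, $\varsigma_{x'}(\rho)$ flips the signs of $\rho_x$, $x<x'$; $\psi_{x'}e_\rho=\frac{-\rho_{x'-1/2}+i\rho_{x'+1/2}}{\sqrt2}e_{\varsigma_{x'}(\rho)}$,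 $\psi^*_{x'}e_\rho=\frac{-i\rho_{x'-1/2}+\rho_{x'+1/2}}{\sqrt2}e_{\varsigma_{x'}(\rho)}$. Substrip eigenfunctions: for integers $a'<b'$, $n=b'-a'$, on the lattice strip $\{a',\dots,b'\}\times\mathbb Z\subset\mathbb C$ with nearest-neighbour edges (identified with midpoints), $F$ is s-holomorphic if $F(z_1)+\frac{i|v-p|}{v-p}\overline{F(z_1)}=F(z_2)+\frac{i|v-p|}{v-p}\overline{F(z_2)}$ for edges adjacent to a common vertex $v$ and face $p$, with Riemann boundary values if $F(a'+iy')\in e^{-i\pi/4}\mathbb R$, $F(b'+iy')\in e^{i\pi/4}\mathbb R$. For $k\in\mathcal K^{(n)}$ let $\omega_k\in((k-\frac12)\pi/n,k\pi/n)$ solve $\cos((n+\frac12)\omega)/\cos((n-\frac12)\omega)=3-2\sqrt2$, $\lambda^{(n)}_{\pm k}=(2-\cos\omega_k+\sqrt{(3-\cos\omega_k)(1-\cos\omega_k)})^{\pm1}$; $F_{\pm k}$ is the unique s-holomorphic function with Riemann boundary values, $F_{\pm k}(z+ih)=(\lambda^{(n)}_{\pm k})^hF_{\pm k}(z)$, values in $e^{-i\pi/4}\mathbb R_{>0}$ on edges $a'+iy'$, and unit-norm restriction to the height-0 horizontal edges $\{a'+\frac12,\dots,b'-\frac12\}$, the norm coming from $\langle f,g\rangle=\mathrm{Re}\sum f\bar g$. Known facts: these restrictions $f_{k}$, $k\in\pm\mathcal K^{(n)}$, form an orthonormal basis of $\mathbb C^{\{a'+1/2,\dots,b'-1/2\}}$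 and satisfy $f_{-k}=-i\overline{f_k}$. Let $f^L_k$ ($k\in\pm\mathcal K^{(\ell_L)}$) be these restrictions for $(a',b')=(a,0)$ (functions on $C^*_L$) and $f^R_k$ ($k\in\pm\mathcal K^{(\ell_R)}$) those for $(a',b')=(0,b)$ (functions on $C^*_R$). Modes: $\chi^L_k=\frac{e^{i\pi/4}}{2}\sum_{x'\in C^*_L}(i f^L_k(x')\psi_{x'}-i\overline{f^L_k(x')}\psi^*_{x'})$ and $\chi^R_k=\frac{e^{i\pi/4}}{2}\sum_{x'\in C^*_R}(i f^R_k(x')\psi_{x'}-i\overline{f^R_k(x')}\psi^*_{x'})$. *)

From HB Require Import structures.
From mathcomp Require Import all_boot all_order all_algebra.
From mathcomp Require Import all_classical all_reals all_analysis.
From mathcomp Require Import complex.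
Set Implicit Arguments. Unset Strict Implicit. Unset Printing Implicit Defensive.
Import Order.TTheory GRing.Theory Num.Theory.
Local Open Scope ring_scope.
Local Open Scope complex_scope.

Section Defs.
Variable R : realType.
Local Notation C := R[i].

Definition eipi4 : C := (Num.sqrt (2:R))^-1 +i* (Num.sqrt (2:R))^-1.

(* Spin configurations rho in {+-1}^C, C = {a,...,b}.  Index i : 'I_N
   encodes the site x = a + i; (rho i = true) means rho_x = +1.        *)
Definition nsites (a b : int) : nat := (`|b - a|%N).+1.
Definition spin (a b : int) := {ffun 'I_(nsites a b) -> bool}.

(* rho_x as a number (+1 / -1); only used for a <= x <= b *)
Definition spinval (a b : int) (rho : spin a b) (x : int) : R :=
  if rho (inord `|x - a|%N) then 1 else -1.

(* sigma_{x'} with x' = j + 1/2: flip the signs of rho_x for x < x', i.e. x <= j *)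
Definition flipbelow (a b : int) (j : int) (rho : spin a b) : spin a b :=
  [ffun i : 'I_(nsites a b) => if (a + (i : nat)%:Z <= j) then ~~ rho i else rho i].

(* Operators on tilde V as matrices in the orthonormal basis (e_rho):
   entry (sigma, rho) is the e_sigma-coefficient of A e_rho. *)
Definition op (a b : int) := 'M[C]_(#|{: spin a b}|).

Definition op_of (a b : int) (c : spin a b -> C) (g : spin a b -> spin a b) : op a b :=
  \matrix_(s, r) (if enum_val s == g (enum_val r) then c (enum_val r) else 0).

(* psi_{x'} and psi^*_{x'}, x' = j + 1/2 *)
Definition psi (a b : int) (j : int) : op a b :=
  op_of (fun rho => ((- spinval rho j)%:C + 'i * (spinval rho (j + 1))%:C)
                     / (Num.sqrt (2:R))%:C)
        (flipbelow j).
Definition psistar (a b : int) (j : int) : op a b :=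
  op_of (fun rho => (- 'i * (spinval rho j)%:C + (spinval rho (j + 1))%:C)
                     / (Num.sqrt (2:R))%:C)
        (flipbelow j).

Definition adj (n : nat) (A : 'M[C]_n) : 'M[C]_n := (map_mx conjc A)^T.

Definition anticomm (n : nat) (A B : 'M[C]_n) : 'M[C]_n := A *m B + B *m A.

(* chi = e^{i pi/4}/2 sum_{x' = j+1/2, lo <= j < hi} (i f(x') psi_{x'} - i conj(f(x')) psi^*_{x'}),
   with f given as a function of j. *)
Definition mode_op (a b : int) (lo hi : int) (f : int -> C) : op a b :=
  (eipi4 / 2%:R) *:
    \sum_(m < `|hi - lo|%N)
      let j := lo + m%:Z in
      ('i * f j) *: psi a b j - ('i * conjc (f j)) *: psistar a b j.

(* Signed half-integers k in +-K^{(n)} are encoded by K = 2k (odd, |K| < 2n). *)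
Definition inK (n : nat) (K : int) : bool := odd `|K|%N && (`|K| < 2 * n)%N.

(* Lattice strip {a',...,b'} x Z.  Points z with 2z in Z + iZ are encoded by
   doubled coordinates (X, Y), z = (X + iY)/2. *)
Definition is_vertex (a' b' X Y : int) : bool :=
  ~~ odd `|X|%N && ~~ odd `|Y|%N && (2 * a' <= X <= 2 * b').
Definition is_face (a' b' X Y : int) : bool :=
  odd `|X|%N && odd `|Y|%N && (2 * a' < X < 2 * b').
(* edges identified with their midpoints *)
Definition is_hedge (a' b' X Y : int) : bool :=
  odd `|X|%N && ~~ odd `|Y|%N && (2 * a' < X < 2 * b').
Definition is_vedge (a' b' X Y : int) : bool :=
  ~~ odd `|X|%N && odd `|Y|%N && (2 * a' <= X <= 2 * b').
Definition is_edge (a' b' X Y : int) : bool := is_hedge a' b' X Y || is_vedge a' b' X Y.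
(* adjacency (edge midpoint at distance 1/2 from a vertex / face centre) *)
Definition adjacent (X1 Y1 X2 Y2 : int) : bool := (`|X1 - X2| + `|Y1 - Y2| == 1)%N.

Definition pt (X Y : int) : C := (X%:~R / 2%:R) +i* (Y%:~R / 2%:R).

Definition s_holomorphic (a' b' : int) (F : int -> int -> C) : Prop :=
  forall X1 Y1 X2 Y2 Xv Yv Xp Yp : int,
    is_edge a' b' X1 Y1 -> is_edge a' b' X2 Y2 ->
    is_vertex a' b' Xv Yv -> is_face a' b' Xp Yp ->
    adjacent X1 Y1 Xv Yv -> adjacent X2 Y2 Xv Yv ->
    adjacent X1 Y1 Xp Yp -> adjacent X2 Y2 Xp Yp ->
    let w := pt Xv Yv - pt Xp Yp in
    let eta := 'i * `|w| / w in
    F X1 Y1 + eta * conjc (F X1 Y1) = F X2 Y2 + eta * conjc (F X2 Y2).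

Definition riemann_bv (a' b' : int) (F : int -> int -> C) : Prop :=
  forall Y : int, odd `|Y|%N ->
    (exists r : R, F (2 * a') Y = r%:C * conjc eipi4) /\
    (exists r : R, F (2 * b') Y = r%:C * eipi4).

(* omega_k for k = m + 1/2 in K^{(n)}:
   omega in ((k - 1/2) pi / n, k pi / n) solving
   cos((n+1/2) omega) / cos((n-1/2) omega) = 3 - 2 sqrt 2 *)
Definition is_omega (n m : nat) (om : R) : Prop :=
  (m%:R * pi / n%:R < om < (m%:R + 2^-1) * pi / n%:R) /\
  cos ((n%:R + 2^-1) * om) / cos ((n%:R - 2^-1) * om) = 3%:R - 2%:R * Num.sqrt 2.

Definition lambda_base (om : R) : R :=
  2%:R - cos om + Num.sqrt ((3%:R - cos om) * (1 - cos om)).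

Definition is_eigenfunction (a' b' : int) (K : int) (F : int -> int -> C) : Prop :=
  exists om : R,
    is_omega `|b' - a'|%N (`|K|%N).-1./2 om /\
    let lam := if (0 < K) then lambda_base om else (lambda_base om)^-1 in
    s_holomorphic a' b' F /\ riemann_bv a' b' F /\
    (forall (X Y : int) (h : int), is_edge a' b' X Y ->
        F X (Y + 2 * h) = (lam ^ h)%:C * F X Y) /\
    (forall Y : int, odd `|Y|%N ->
        exists r : R, 0 < r /\ F (2 * a') Y = r%:C * conjc eipi4) /\
    'Re (\sum_(m < `|b' - a'|%N)
           F (2 * (a' + m%:Z) + 1) 0 * conjc (F (2 * (a' + m%:Z) + 1) 0)) = 1.

(* f : int -> int -> C, f K j = f_{K/2}(j + 1/2), is the family of
   height-0 restrictions of the eigenfunctions of the strip (a', b') *)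
Definition restrictions (a' b' : int) (f : int -> int -> C) : Prop :=
  forall K, inK `|b' - a'|%N K ->
    exists F, is_eigenfunction a' b' K F /\
      forall j : int, a' <= j < b' -> f K j = F (2 * j + 1) 0.

(* Known facts (from the context): orthonormality w.r.t. <f,g> = Re sum f conj g,
   and f_{-k} = -i conj f_k *)
Definition known_facts (a' b' : int) (f : int -> int -> C) : Prop :=
  (forall K1 K2, inK `|b' - a'|%N K1 -> inK `|b' - a'|%N K2 ->
     'Re (\sum_(m < `|b' - a'|%N) f K1 (a' + m%:Z) * conjc (f K2 (a' + m%:Z)))
       = (K1 == K2)%:R) /\
  (forall K, inK `|b' - a'|%N K -> forall j : int, a' <= j < b' ->
     f (- K) j = - 'i * conjc (f K j)).

End Defs.

From HB Require Import structures.
From mathcomp Require Import all_boot all_order all_algebra.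
From mathcomp Require Import all_classical all_reals all_analysis.
From mathcomp Require Import complex ring zify.
Set Implicit Arguments. Unset Strict Implicit. Unset Printing Implicit Defensive.
Import Order.TTheory GRing.Theory Num.Theory.
Local Open Scope ring_scope.
Local Open Scope complex_scope.

(* Each of psi_{x'} and psi^*_{x'} is a combination of the two operators
   e_rho |-> rho_{x' -+ 1/2} e_{sigma_{x'}(rho)}, so every mode is a sum over
   the sites x' of such site operators.  These obey canonical anticommutation
   relations: at a single site the anticommutator is a scalar, because
   sigma_{x'} is an involution negating rho_{x'-1/2} but not rho_{x'+1/2};
   at two different sites it vanishes.  Bilinearity then turns
   {chi_{k1}, chi_{k2}} into the scalar Re sum_{x'} f_{k1}(x') conj f_{-k2}(x'),
   using f_{-k} = -i conj f_k, which is delta_{k1,-k2} by orthonormality; modes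
   supported on the disjoint strips anticommute, and the adjoint is computed
   site by site in the same way. *)

Section AdjointAnticommutator.
Variables (R : realType) (n : nat).
Local Notation M := 'M[R[i]]_n.

Lemma adjZ (k : R[i]) (A : M) : adj (k *: A) = k^*%R *: adj A.
Proof. by apply/matrixP=> s r; rewrite !mxE rmorphM. Qed.

Lemma adj_sum (I : Type) (r : seq I) (X : I -> M) :
  adj (\sum_(i <- r) X i) = \sum_(i <- r) adj (X i).
Proof.
apply/matrixP=> s t; rewrite !mxE !summxE rmorph_sum.
by apply: eq_bigr => i _; rewrite !mxE.
Qed.

Lemma anticommC (A B : M) : anticomm A B = anticomm B A.
Proof. by rewrite /anticomm addrC. Qed.

Lemma anticommZ (k1 k2 : R[i]) (A B : M) :
  anticomm (k1 *: A) (k2 *: B) = (k1 * k2) *: anticomm A B.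
Proof.
by rewrite /anticomm -!scalemxAl -!scalemxAr !scalerA [k2 * k1]mulrC -scalerDr.
Qed.

Lemma anticomm_sum (I J : Type) (r : seq I) (s : seq J) (X : I -> M) (Y : J -> M) :
  anticomm (\sum_(i <- r) X i) (\sum_(j <- s) Y j) =
  \sum_(i <- r) \sum_(j <- s) anticomm (X i) (Y j).
Proof.
rewrite /anticomm !mulmx_suml.
under eq_bigr do rewrite mulmx_sumr.
under [X in _ + X = _]eq_bigr do rewrite mulmx_sumr.
rewrite [X in _ + X = _]exchange_big /= -big_split /=.
by apply: eq_bigr => i _; rewrite -big_split.
Qed.

End AdjointAnticommutator.

Section SpinOperators.
Variables (R : realType) (a b : int).
Local Notation C := R[i].
Local Notation op := (op R a b).
Local Notation sv r x := ((@spinval R a b r x)%:C).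

Lemma flipbelowK j : involutive (@flipbelow a b j).
Proof. by move=> r; apply/ffunP=> i; rewrite !ffunE; case: ifP => h; rewrite ?h ?negbK. Qed.

Lemma flipbelowC j j' : flipbelow j \o flipbelow j' =1 flipbelow j' \o @flipbelow a b j.
Proof. by move=> r; apply/ffunP=> i; rewrite !ffunE; do 2 case: ifP. Qed.

Lemma spinval_flipbelow j r x : a <= x <= b ->
  sv (flipbelow j r) x = if x <= j then - sv r x else sv r x.
Proof.
move=> /andP[hax hxb]; rewrite /spinval ffunE.
have hx : (`|x - a|%N < nsites a b)%N by rewrite /nsites ltnS; lia.
have ex : a + (`|x - a|%N)%:Z = x by lia.
by rewrite (inordK hx) ex; case: (x <= j); case: (r _); rewrite /= ?rmorphN ?opprK ?rmorph1.
Qed.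

Lemma spinval_sqr r x : sv r x * sv r x = 1.
Proof. by rewrite -rmorphM /spinval; case: ifP; rewrite ?mulrNN mulr1. Qed.

Lemma conj_spinval r x : (sv r x)^*%R = sv r x.
Proof. exact: conjc_real. Qed.

Lemma eq_op_of (c c' : spin a b -> C) g g' : c =1 c' -> g =1 g' ->
  op_of c g = op_of c' g'.
Proof. by move=> hc hg; apply/matrixP=> s r; rewrite !mxE hc hg. Qed.

Lemma mul_op_of (c d : spin a b -> C) g h :
  op_of c g *m op_of d h = op_of (fun r => c (h r) * d r) (g \o h).
Proof.
apply/matrixP=> s r; rewrite !mxE (bigD1 (enum_rank (h (enum_val r)))) //=.
rewrite big1 => [|t ht]; rewrite !mxE ?enum_rankK ?eqxx.
  by rewrite addr0; case: ifP; rewrite ?mul0r.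
suff /negbTE -> : enum_val t != h (enum_val r) by rewrite mulr0.
by apply: contra ht => /eqP <-; rewrite enum_valK.
Qed.

Lemma add_op_of (c d : spin a b -> C) g :
  op_of c g + op_of d g = op_of (fun r => c r + d r) g.
Proof. by apply/matrixP=> s r; rewrite !mxE; case: ifP; rewrite ?addr0. Qed.

Lemma scale_op_of (k : C) (c : spin a b -> C) g :
  k *: op_of c g = op_of (fun r => k * c r) g.
Proof. by apply/matrixP=> s r; rewrite !mxE; case: ifP; rewrite ?mulr0. Qed.

Lemma opp_op_of (c : spin a b -> C) g : - op_of c g = op_of (fun r => - c r) g.
Proof. by apply/matrixP=> s r; rewrite !mxE; case: ifP; rewrite ?oppr0. Qed.

Lemma op_of_id (k : C) : op_of (fun _ => k) id = k%:M :> op.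
Proof. by apply/matrixP=> s r; rewrite !mxE /= (inj_eq enum_val_inj); case: eqP. Qed.

Lemma op_of0 g : op_of (fun _ => 0) g = 0 :> op.
Proof. by apply/matrixP=> s r; rewrite !mxE; case: ifP. Qed.

Lemma adj_op_of (c : spin a b -> C) g : involutive g ->
  adj (op_of c g) = op_of (fun r => (c (g r))^*%R) g.
Proof.
move=> hg; apply/matrixP=> s r; rewrite !mxE.
have -> : (enum_val r == g (enum_val s)) = (enum_val s == g (enum_val r)).
  by apply/eqP/eqP => ->; rewrite hg.
by case: eqP => [->|_]; last exact: conjC0.
Qed.

Definition site_op (j : int) (al be : C) : op :=
  op_of (fun r => al * sv r j + be * sv r (j + 1)) (flipbelow j).

Lemma scale_site_op (k : C) j al be : k *: site_op j al be = site_op j (k * al) (k * be).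
Proof. by rewrite /site_op scale_op_of; apply: eq_op_of => // r; ring. Qed.

Lemma adj_site_op j al be : a <= j < b ->
  adj (site_op j al be) = site_op j (- al^*%R) (be^*%R).
Proof.
move=> hj; rewrite /site_op adj_op_of; last exact: flipbelowK.
apply: eq_op_of => // r; rewrite !spinval_flipbelow ?lexx; try lia.
have -> : (j + 1 <= j) = false by lia.
by rewrite rmorphD !rmorphM rmorphN /= !conj_spinval; ring.
Qed.

Lemma anticomm_site_op j al be ga de : a <= j < b ->
  anticomm (site_op j al be) (site_op j ga de) = (2 * (be * de - al * ga))%:M.
Proof.
move=> hj; rewrite /anticomm /site_op !mul_op_of add_op_of -op_of_id.
apply: eq_op_of => [r|]; last exact: flipbelowK.
rewrite /= !spinval_flipbelow ?lexx; try lia.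
have -> : (j + 1 <= j) = false by lia.
have e1 := spinval_sqr r j; have e2 := spinval_sqr r (j + 1).
by ring: e1 e2.
Qed.

(* The flip at the larger site negates both spins read at the smaller one. *)
Lemma anticomm_site_op_lt j j' al be ga de : a <= j -> j < j' -> j' < b ->
  anticomm (site_op j al be) (site_op j' ga de) = 0.
Proof.
move=> hj hjj' hj'; rewrite /anticomm /site_op !mul_op_of.
rewrite [X in _ + X](eq_op_of (frefl _) (flipbelowC j' j)).
rewrite add_op_of -(op_of0 (flipbelow j \o flipbelow j')).
apply: eq_op_of => r //=; rewrite !spinval_flipbelow; try lia.
have -> : (j <= j') by lia.
have -> : (j + 1 <= j') by lia.
have -> : (j' <= j) = false by lia.
have -> : (j' + 1 <= j) = false by lia.
ring.
Qed.

Lemma anticomm_site_op_sum lo n (al be ga de : 'I_n -> C) :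
  a <= lo -> lo + n%:Z <= b ->
  anticomm (\sum_(m < n) site_op (lo + m%:Z) (al m) (be m))
           (\sum_(m < n) site_op (lo + m%:Z) (ga m) (de m)) =
  (\sum_(m < n) 2 * (be m * de m - al m * ga m))%:M.
Proof.
move=> hlo hhi; rewrite anticomm_sum raddf_sum /=; apply: eq_bigr => m _.
rewrite (bigD1 m) //= anticomm_site_op; last by have := ltn_ord m; lia.
rewrite big1 ?addr0 // => m' neq_m'm.
have := ltn_ord m; have := ltn_ord m'.
have [lt_mm'|lt_m'm|/val_inj eq_mm'] := ltngtP m m'; last by rewrite eq_mm' eqxx in neq_m'm.
- by move=> *; apply: anticomm_site_op_lt; lia.
- by move=> *; rewrite anticommC; apply: anticomm_site_op_lt; lia.
Qed.

Lemma anticomm_site_op_sum_disjoint lo n lo' n' (al be : 'I_n -> C) (ga de : 'I_n' -> C) :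
  a <= lo -> lo + n%:Z <= lo' -> lo' + n'%:Z <= b ->
  anticomm (\sum_(m < n) site_op (lo + m%:Z) (al m) (be m))
           (\sum_(m < n') site_op (lo' + m%:Z) (ga m) (de m)) = 0.
Proof.
move=> hlo hlo' hhi; rewrite anticomm_sum big1 // => m _; rewrite big1 // => m' _.
by apply: anticomm_site_op_lt; have := ltn_ord m; have := ltn_ord m'; lia.
Qed.

End SpinOperators.

Arguments site_op {R a b}.

Section ModeCoefficients.
Variable R : realType.
Local Notation C := R[i].

Definition invsqrt2 : C := ((Num.sqrt (2:R))%:C)^-1.

Definition mode_scale : C := (1 + 'i) / 4.

Definition mode_alpha (z : C) : C := - ('i * z + z^*%R).
Definition mode_beta (z : C) : C := - (z + 'i * z^*%R).

Lemma conjcE (z : C) : conjc z = z^*%R.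
Proof. by []. Qed.

Lemma mulCii : 'i * 'i = -1 :> C.
Proof. by rewrite -expr2 sqrCi. Qed.

Lemma invsqrt2_sqr : invsqrt2 * invsqrt2 = 2^-1.
Proof.
by rewrite /invsqrt2 -invfM -rmorphM -expr2 sqr_sqrtr ?ler0n // rmorph_nat.
Qed.

Lemma eipi4E : eipi4 R = invsqrt2 + 'i * invsqrt2.
Proof. by rewrite /invsqrt2 -fmorphV /= {1}[eipi4 R]complexE. Qed.

Lemma eipi4_invsqrt2 : eipi4 R / 2%:R * invsqrt2 = mode_scale.
Proof.
rewrite eipi4E /mode_scale.
have -> : (invsqrt2 + 'i * invsqrt2) / 2%:R * invsqrt2 = (1 + 'i) / 2 * (invsqrt2 * invsqrt2).
  by ring.
by rewrite invsqrt2_sqr -mulrA -invfM -natrM.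
Qed.

Lemma conj_mode_scale : mode_scale^*%R = mode_scale * - 'i.
Proof.
rewrite /mode_scale rmorphM rmorphD /= fmorphV /= conjC_nat conjCi rmorph1.
by have h := mulCii; ring: h.
Qed.

Lemma conj_mode_alpha z : 'i * (mode_alpha z)^*%R = mode_alpha (- 'i * z^*%R).
Proof.
rewrite /mode_alpha !(rmorphN, rmorphD, rmorphM) /= conjCi conjCK.
by have h := mulCii; ring: h.
Qed.

Lemma conj_mode_beta z : - 'i * (mode_beta z)^*%R = mode_beta (- 'i * z^*%R).
Proof.
rewrite /mode_beta !(rmorphN, rmorphD, rmorphM) /= conjCi conjCK.
by have h := mulCii; ring: h.
Qed.

Lemma mode_coef_anticomm z1 z2 :
  mode_scale * mode_scale *
    (2 * (mode_beta z1 * mode_beta z2 - mode_alpha z1 * mode_alpha z2)) =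
  'Re (z1 * (- 'i * z2^*%R)^*%R).
Proof.
rewrite ReE /mode_scale /mode_alpha /mode_beta !rmorphM /= !conjCK rmorphN /= conjCi.
by have h := mulCii; field: h.
Qed.

End ModeCoefficients.

Arguments mode_scale {R}.

Section Modes.
Variables (R : realType) (a b : int).
Local Notation C := R[i].

Lemma mode_op_site lo hi (f : int -> C) : mode_op a b lo hi f =
  mode_scale *: \sum_(m < `|hi - lo|%N)
     site_op (lo + m%:Z) (mode_alpha (f (lo + m%:Z))) (mode_beta (f (lo + m%:Z))).
Proof.
rewrite /mode_op -eipi4_invsqrt2 -[RHS]scalerA; congr (_ *: _); rewrite scaler_sumr.
apply: eq_bigr => m _; rewrite /psi /psistar /site_op !scale_op_of opp_op_of add_op_of.
apply: eq_op_of => // r; rewrite /invsqrt2 /mode_alpha /mode_beta conjcE.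
by have h := mulCii R; ring: h.
Qed.

Lemma adj_mode_op lo hi (f g : int -> C) : a <= lo -> lo <= hi -> hi <= b ->
  (forall j, lo <= j < hi -> g j = - 'i * conjc (f j)) ->
  adj (mode_op a b lo hi f) = mode_op a b lo hi g.
Proof.
move=> hlo hlohi hhi hg.
rewrite !mode_op_site adjZ adj_sum conj_mode_scale -scalerA; congr (_ *: _).
rewrite scaler_sumr; apply: eq_bigr => m _.
have hm := ltn_ord m.
rewrite adj_site_op; last by lia.
rewrite scale_site_op hg; last by lia.
by rewrite conjcE mulrN -mulNr opprK conj_mode_alpha conj_mode_beta.
Qed.

Lemma anticomm_mode_op lo hi (f1 f2 g : int -> C) : a <= lo -> lo <= hi -> hi <= b ->
  (forall j, lo <= j < hi -> g j = - 'i * conjc (f2 j)) ->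
  anticomm (mode_op a b lo hi f1) (mode_op a b lo hi f2) =
  ('Re (\sum_(m < `|hi - lo|%N) f1 (lo + m%:Z) * conjc (g (lo + m%:Z))))%:M.
Proof.
move=> hlo hlohi hhi hg.
rewrite !mode_op_site anticommZ anticomm_site_op_sum //; last by lia.
rewrite scale_scalar_mx mulr_sumr; congr (_%:M); rewrite raddf_sum; apply: eq_bigr => m _.
have hm := ltn_ord m.
by rewrite hg ?conjcE ?mode_coef_anticomm //; lia.
Qed.

Lemma anticomm_mode_op_disjoint lo hi lo' hi' (f1 f2 : int -> C) :
  a <= lo -> lo <= hi -> hi <= lo' -> lo' <= hi' -> hi' <= b ->
  anticomm (mode_op a b lo hi f1) (mode_op a b lo' hi' f2) = 0.
Proof.
move=> *; rewrite !mode_op_site anticommZ anticomm_site_op_sum_disjoint ?scaler0 //; lia.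
Qed.

End Modes.

Theorem proposition5p13 (R : realType) (a b : int) (ha : a < 0) (hb : 0 < b)
  (fL fR : int -> int -> R[i])
  (HL : restrictions a 0 fL) (HR : restrictions 0 b fR)
  (KL : known_facts a 0 fL) (KR : known_facts 0 b fR) :
  let ellL := `|a|%N in
  let ellR := `|b|%N in
  let chiL := fun K => mode_op a b a 0 (fL K) in
  let chiR := fun K => mode_op a b 0 b (fR K) in
  (forall K, inK ellL K -> adj (chiL K) = chiL (- K)) /\
  (forall K, inK ellR K -> adj (chiR K) = chiR (- K)) /\
  (forall K1 K2, inK ellL K1 -> inK ellL K2 ->
     anticomm (chiL K1) (chiL K2) = (K1 == - K2)%:R%:M) /\
  (forall K1 K2, inK ellR K1 -> inK ellR K2 ->
     anticomm (chiR K1) (chiR K2) = (K1 == - K2)%:R%:M) /\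
  (forall K K', inK ellL K -> inK ellR K' ->
     anticomm (chiL K) (chiR K') = 0).
Proof.
move=> ellL ellR chiL chiR.
case: KL => [orthoL conjL]; case: KR => [orthoR conjR].
have lenL : `|0 - a|%N = ellL by rewrite sub0r abszN.
have lenR : `|b - 0|%N = ellR by rewrite subr0.
have inKN n K : inK n (- K) = inK n K by rewrite /inK abszN.
rewrite -lenL -lenR in chiL chiR *.
have ha' := ltW ha; have hb' := ltW hb.
split; [|split; [|split; [|split]]].
- by move=> K hK; apply: adj_mode_op; rewrite ?lexx // => j hj; rewrite conjL.
- by move=> K hK; apply: adj_mode_op; rewrite ?lexx // => j hj; rewrite conjR.
- move=> K1 K2 h1 h2; rewrite (@anticomm_mode_op _ _ _ _ _ _ _ (fL (- K2))) ?lexx //.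
    by rewrite orthoL ?inKN.
  by move=> j hj; rewrite conjL.
- move=> K1 K2 h1 h2; rewrite (@anticomm_mode_op _ _ _ _ _ _ _ (fR (- K2))) ?lexx //.
    by rewrite orthoR ?inKN.
  by move=> j hj; rewrite conjR.
- by move=> K K' _ _; apply: anticomm_mode_op_disjoint; rewrite ?lexx.
Qed.
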